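(* The following formulas define an action of $\mathscr H$ on $\mathscr C$, and the injective map $r^*:K_H(\mathrm{Gr})\to\mathscr C$ intertwines the $\mathscr H$-action on $K_H(\mathrm{Gr})$ with it: for $f\in\mathbb C(P)$, $\beta\in Q^\vee$, $i\in I$, $\mu\in P$, $$D_0(f\otimes t_\beta)=\frac{f}{1-e^{-\vartheta}}\otimes t_\beta-\frac{e^{-\vartheta}s_\vartheta(f)}{1-e^{-\vartheta}}\otimes t_{s_\vartheta(\beta-\vartheta^\vee)},$$ $$D_i(f\otimes t_\beta)=\frac{f}{1-e^{\alpha_i}}\otimes t_\beta-\frac{e^{\alpha_i}s_i(f)}{1-e^{\alpha_i}}\otimes t_{s_i\beta},\qquad e^\mu(f\otimes t_\beta)=e^\mu f\otimes t_\beta.$$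
   Context: $G$ is a connected, simply connected simple algebraic group over $\mathbb C$, with Borel $B$, maximal torus $H$, Weyl group $W$ with longest element $w_0$, weight lattice $P$, simple roots $\alpha_i$ ($i\in I$), highest root $\vartheta$ with coroot $\vartheta^\vee$ and reflection $s_\vartheta$, coroot lattice $Q^\vee$. $W_{\mathrm{af}}=W\ltimes Q^\vee$ with translations $t_\beta$, a Coxeter group generated by $s_i$, $i\in I_{\mathrm{af}}=I\cup\{0\}$, $s_\vartheta s_0=t_{-\vartheta^\vee}$; it acts on $P$ through $W_{\mathrm{af}}\to W$. $\mathbb CP$ is the group algebra of $P$, $\mathbb C(P)$ its fraction field. Nil-DAHA $\mathscr H$: generated by $e^\lambda$, $D_i$ ($i\in I_{\mathrm{af}}$) with $e^{\lambda+\mu}=e^\lambda e^\mu$, $D_i^2=D_i$, braid relations of $W_{\mathrm{af}}$, $D_ie^\lambda-e^{s_i\lambda}D_i=\frac{e^\lambda-e^{s_i\lambda}}{1-e^{\alpha_i}}$ ($i\in I$), $D_0e^\lambda-e^{s_\vartheta\lambda}D_0=\frac{e^\lambda-e^{s_\vartheta\lambda}}{1-e^{-\vartheta}}$; $D_w$ is the product along a reduced word. $\mathscr A=\mathbb C(P)\otimes\mathbb CW_{\mathrm{af}}$ with $(f\otimes w)(g\otimes v)=f\,w(g)\otimes wv$; embedding $\iota^*:\mathscr H\to\mathscr A$: $e^\lambda\mapsto e^\lambda\otimes1$, $D_i\mapsto\frac1{1-e^{\alpha_i}}\otimes1-\frac{e^{\alpha_i}}{1-e^{\alpha_i}}\otimes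 s_i$ ($i\in I$), $D_0\mapsto\frac1{1-e^{-\vartheta}}\otimes1-\frac{e^{-\vartheta}}{1-e^{-\vartheta}}\otimes s_0$. $\mathrm{Gr}=G(\!(z)\!)/G[\![z]\!]$ with Iwahori-orbit closures $\mathrm{Gr}_\beta$ ($\beta\in Q^\vee$). $K_H(\mathrm{Gr})=\bigoplus_\beta\mathbb CP[\mathcal O_{\mathrm{Gr}_\beta}]$ is identified with the left ideal $\mathscr HD_{w_0}$ via $e^\lambda[\mathcal O_{\mathrm{Gr}_\beta}]\mapsto e^\lambda D_{t_\beta}D_{w_0}$; $\mathscr H$ acts by left multiplication. $\mathscr C=\mathbb C(P)\otimes\mathbb CQ^\vee\subset\mathscr A$; $\mathsf{pr}:\mathscr A\to\mathscr C$, $f\otimes t_\beta w\mapsto f\otimes t_\beta$ ($w\in W$). $r^*:=\mathsf{pr}\circ\iota^*:K_H(\mathrm{Gr})\to\mathscr C$, which is injective. *)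

From HB Require Import structures.
From mathcomp Require Import all_boot all_order all_algebra.
From mathcomp Require Import fraction mpoly complex Rstruct.
Set Implicit Arguments.
Unset Strict Implicit.
Unset Printing Implicit Defensive.
Import GRing.Theory.
Local Open Scope ring_scope.

Definition CC : fieldType := complex Rdefinitions.R.

(* The root datum of the simply connected simple group G of
   rank n is encoded by its Cartan matrix Cm : 'M[int]_n with
   Cm i j = <alpha_i^vee, alpha_j>.
   - weight lattice P = 'cV[int]_n, coordinates in the basis of fundamental
     weights (so <alpha_i^vee, lambda> = lambda i 0);
   - coroot lattice Q^vee = 'cV[int]_n, coordinates in the basis of simple
     coroots (alpha_i^vee = delta_mx i 0);
   - pairing <beta, lambda> = sum_k beta_k lambda_k;
   - simple root alpha_j = col j Cm. *)

Notation "x %:F" := (@FracField.tofrac _ x).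

Definition CP (n : nat) : fieldType := {fraction {mpoly CC[n]}}.

(* e^lambda in C(P) = C(x_1,...,x_n), x_j = e^{omega_j} *)
Definition epow (n : nat) (l : 'cV[int]_n) : CP n :=
  \prod_(j < n) (((('X_j : {mpoly CC[n]}))%:F : CP n) ^ (l j 0)).

(* action of an (integer) matrix M on P (lambda |-> M lambda), extended to a
   ring map on C(P): e^lambda |-> e^{M lambda}. *)
Definition wact (n : nat) (M : 'M[int]_n) (f : CP n) : CP n :=
  let h := fun j : 'I_n => epow (M *m delta_mx j 0) in
  let c := fun a : CC => ((a%:MP : {mpoly CC[n]})%:F : CP n) in
  let r := repr f in
  mmap c h (\n_r) / mmap c h (\d_r).

Definition alpha (n : nat) (Cm : 'M[int]_n) (i : 'I_n) : 'cV[int]_n := col i Cm.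

Definition sP (n : nat) (Cm : 'M[int]_n) (i : 'I_n) : 'M[int]_n :=
  1%:M - alpha Cm i *m delta_mx 0 i.
Definition sQ (n : nat) (Cm : 'M[int]_n) (i : 'I_n) : 'M[int]_n :=
  (sP Cm i)^T.

Definition reflP (n : nat) (th thv : 'cV[int]_n) : 'M[int]_n :=
  1%:M - th *m thv^T.
Definition reflQ (n : nat) (th thv : 'cV[int]_n) : 'M[int]_n :=
  1%:M - thv *m th^T.

Definition wprod (n : nat) (Cm : 'M[int]_n) (w : seq 'I_n) : 'M[int]_n :=
  foldr (fun i M => sP Cm i *m M) 1%:M w.
Definition wprodQ (n : nat) (Cm : 'M[int]_n) (w : seq 'I_n) : 'M[int]_n :=
  foldr (fun i M => sQ Cm i *m M) 1%:M w.

(* Cartan matrix of a simply connected simple group: generalized Cartan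
   matrix, indecomposable, with finite Weyl group (= finite type). *)
Definition simple_cartan (n : nat) (Cm : 'M[int]_n) : Prop :=
  (0 < n)%N /\
  [/\ forall i, Cm i i = 2,
      forall i j, i != j -> Cm i j <= 0,
      forall i j, (Cm i j == 0) = (Cm j i == 0),
      (forall J : {set 'I_n},
         (forall i j, i \in J -> j \notin J -> Cm i j = 0) ->
         J = set0 \/ J = setT)
    & exists s : seq 'M[int]_n, forall w, wprod Cm w \in s].

(* roots = W-orbits of simple roots *)
Definition is_root (n : nat) (Cm : 'M[int]_n) (g : 'cV[int]_n) : Prop :=
  exists (w : seq 'I_n) (i : 'I_n), g = wprod Cm w *m alpha Cm i.

Definition highest_root (n : nat) (Cm : 'M[int]_n) (th : 'cV[int]_n) : Prop :=
  is_root Cm th /\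
  forall g, is_root Cm g ->
    exists c : 'cV[int]_n, (forall k, 0 <= c k 0) /\ th - g = Cm *m c.
Definition coroot_of (n : nat) (Cm : 'M[int]_n) (th thv : 'cV[int]_n) : Prop :=
  exists (w : seq 'I_n) (i : 'I_n),
    th = wprod Cm w *m alpha Cm i /\ thv = wprodQ Cm w *m delta_mx i 0.

Definition reduced_word (n : nat) (Cm : 'M[int]_n) (w : seq 'I_n) : Prop :=
  forall w', wprod Cm w' = wprod Cm w -> (size w <= size w')%N.
Definition longest_word (n : nat) (Cm : 'M[int]_n) (w : seq 'I_n) : Prop :=
  reduced_word Cm w /\
  forall w', reduced_word Cm w' -> (size w' <= size w)%N.

(* an element of W_af: (M, N, beta) stands for t_beta w, where w acts on P
   by M and on Q^vee by N. *)
Definition waf (n : nat) := ('M[int]_n * 'M[int]_n * 'cV[int]_n)%type.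
Definition waf1 (n : nat) : waf n := (1%:M, 1%:M, 0).
Definition wafmul (n : nat) (x y : waf n) : waf n :=
  (x.1.1 *m y.1.1, x.1.2 *m y.1.2, x.2 + x.1.2 *m y.2).

(* elements of A as formal sums  sum_k f_k (x) x_k *)
Definition Aelt (n : nat) := seq (CP n * waf n).
Definition Amul (n : nat) (s t : Aelt n) : Aelt n :=
  [seq (p.1 * wact p.2.1.1 q.1, wafmul p.2 q.2) | p <- s, q <- t].
Definition Acoef (n : nat) (s : Aelt n) (x : waf n) : CP n :=
  \sum_(p <- s | p.2 == x) p.1.

(* elements of C = C(P) (x) C Q^vee as formal sums sum_k f_k (x) t_{beta_k} *)
Definition Celt (n : nat) := seq (CP n * 'cV[int]_n).
Definition Ccoef (n : nat) (s : Celt n) (b : 'cV[int]_n) : CP n :=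
  \sum_(p <- s | p.2 == b) p.1.

Definition prA (n : nat) (s : Aelt n) : Celt n := [seq (p.1, p.2.2) | p <- s].

(* ---- noncommutative C-algebra expressions in the generators of the
   nil-DAHA: e^lambda and D_i, i in I_af = option 'I_n (None = 0) ---- *)
Inductive hexpr (n : nat) : Type :=
| He of 'cV[int]_n
| HD of option 'I_n
| H1
| Hadd of hexpr n & hexpr n
| Hscale of CC & hexpr n
| Hmul of hexpr n & hexpr n.

Section Embedding.
Variables (n : nat) (Cm : 'M[int]_n) (th thv : 'cV[int]_n).

Definition cst (c : CC) : CP n := ((c%:MP : {mpoly CC[n]})%:F).

Definition iota_gen_D (i : option 'I_n) : Aelt n :=
  match i with
  | Some i => let a := epow (alpha Cm i) in
      [:: (1 / (1 - a), waf1 n); (- (a / (1 - a)), (sP Cm i, sQ Cm i, 0))]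
  | None => let a := epow (- th) in
      (* s_0 = s_theta t_{-theta^vee} *)
      [:: (1 / (1 - a), waf1 n);
          (- (a / (1 - a)),
           (reflP th thv, reflQ th thv, reflQ th thv *m (- thv)))]
  end.

Fixpoint iotaA (E : hexpr n) : Aelt n :=
  match E with
  | He l => [:: (epow l, waf1 n)]
  | HD i => iota_gen_D i
  | H1 => [:: (1, waf1 n)]
  | Hadd E1 E2 => iotaA E1 ++ iotaA E2
  | Hscale c E1 => [seq (cst c * p.1, p.2) | p <- iotaA E1]
  | Hmul E1 E2 => Amul (iotaA E1) (iotaA E2)
  end.

Definition phi_gen_D (i : option 'I_n) (p : CP n * 'cV[int]_n) : Celt n :=
  let f := p.1 in let b := p.2 in
  match i with
  | Some i => let a := epow (alpha Cm i) in
      [:: (f / (1 - a), b); (- (a * wact (sP Cm i) f / (1 - a)), sQ Cm i *m b)]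
  | None => let a := epow (- th) in
      [:: (f / (1 - a), b);
          (- (a * wact (reflP th thv) f / (1 - a)), reflQ th thv *m (b - thv))]
  end.
Definition phi_gen_e (l : 'cV[int]_n) (p : CP n * 'cV[int]_n) : Celt n :=
  [:: (epow l * p.1, p.2)].

Definition linext (g : CP n * 'cV[int]_n -> Celt n) (s : Celt n) : Celt n :=
  flatten (map g s).

Fixpoint phiC (E : hexpr n) (s : Celt n) : Celt n :=
  match E with
  | He l => linext (phi_gen_e l) s
  | HD i => linext (phi_gen_D i) s
  | H1 => s
  | Hadd E1 E2 => phiC E1 s ++ phiC E2 s
  | Hscale c E1 => [seq (cst c * p.1, p.2) | p <- phiC E1 s]
  | Hmul E1 E2 => phiC E1 (phiC E2 s)
  end.

Definition Dword (w : seq 'I_n) : hexpr n :=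
  foldr (fun i E => Hmul (HD (Some i)) E) (@H1 n) w.

End Embedding.

From HB Require Import structures.
From mathcomp Require Import all_boot all_order all_algebra.
From mathcomp Require Import fraction mpoly complex Rstruct.
From mathcomp Require Import generic_quotient ring.
Set Implicit Arguments.
Unset Strict Implicit.
Unset Printing Implicit Defensive.
Import GRing.Theory Num.Theory.
Local Open Scope ring_scope.

(* C(P) (x) C Q^vee is a left module over A = C(P) (x) C W_af through
   (f (x) t_g w) . (h (x) t_b) = f w(h) (x) t_{g + w b}, and pr : A -> C is
   A-linear for it.  The formulas of the proposition are exactly
   the actions of iota^*(e^mu) and iota^*(D_i), so every expression acts
   through its image under iota^*: the action is linear, depends only on that
   image, and r^* = pr o iota^* intertwines it with left multiplication.
   The one non-formal point is that W acts on C(P) by field automorphisms: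
   the monomial substitution e^lambda |-> e^(M lambda) is injective on
   polynomials when M is invertible, because after multiplication by a
   suitable e^K it sends distinct monomials to distinct monomials. *)

Lemma frac_reprE (R : idomainType) (f : {fraction R}) :
  f = (\n_(repr f))%:F / (\d_(repr f))%:F.
Proof.
set x := repr f; have dx_neq0 : \d_x != 0 := denom_ratioP x.
apply: (@mulIf _ (\d_x)%:F); first by rewrite tofrac_eq0.
rewrite mulfVK ?tofrac_eq0 // -[f]reprK -/x; unlock FracField.tofrac.
transitivity (\pi_({fraction R})%qT (FracField.mulf x (Ratio \d_x 1))).
  exact: (esym (FracField.pi_mul x (Ratio \d_x 1))).
apply/eqmodP => /=.
by rewrite /FracField.equivf /FracField.mulf !numden_Ratio ?mulf_neq0 ?oner_neq0
  // !mulr1 mulrC.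
Qed.

Section LaurentMonomials.
Variable n : nat.
Local Notation RR := {mpoly CC[n]}.
Local Notation FF := (CP n).

Definition xvar (j : 'I_n) : FF := ('X_j : RR)%:F.

Lemma xvar_neq0 j : xvar j != 0.
Proof.
rewrite tofrac_eq0; apply/eqP => /(congr1 (mcoeff U_(j)%MM)).
by rewrite mcoeffX eqxx mcoeff0 => /eqP; rewrite oner_eq0.
Qed.

Lemma epowE (l : 'cV[int]_n) : epow l = \prod_(j < n) xvar j ^ l j 0.
Proof. by []. Qed.

Lemma epow0 : epow (0 : 'cV[int]_n) = 1.
Proof. by rewrite epowE big1 // => j _; rewrite mxE. Qed.

Lemma epowD (u v : 'cV[int]_n) : epow (u + v) = epow u * epow v.
Proof.
rewrite !epowE -big_split; apply: eq_bigr => j _.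
by rewrite mxE expfzDr // xvar_neq0.
Qed.

Lemma epowZ (z : int) (u : 'cV[int]_n) : epow (z *: u) = epow u ^ z.
Proof.
have expzM x y : (x * y) ^ z = x ^ z * y ^ z :> FF by rewrite expfzMl.
rewrite !epowE (big_morph (fun x : FF => x ^ z) expzM (exp1rz _ z)).
by apply: eq_bigr => j _; rewrite mxE exprz_exp mulrC.
Qed.

Lemma epow_sum (I : Type) (r : seq I) (P : pred I) (F : I -> 'cV[int]_n) :
  epow (\sum_(i <- r | P i) F i) = \prod_(i <- r | P i) epow (F i).
Proof. exact: (big_morph _ epowD epow0). Qed.

Lemma epow_mulmx (M : 'M[int]_n) (v : 'cV[int]_n) :
  epow (M *m v) = \prod_(i < n) epow (M *m delta_mx i 0) ^ v i 0.
Proof.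
rewrite {1}[v]matrix_sum_delta mulmx_sumr epow_sum; apply: eq_bigr => i _.
by rewrite big_ord1 -scalemxAr epowZ.
Qed.

Definition cfrac : {rmorphism CC -> FF} := @FracField.tofrac RR \o @mpolyC n CC.

Local Notation msubst M := (mmap cfrac (fun j => epow (M *m delta_mx j 0))).

Definition mexp (m : 'X_{1..n}) : 'cV[int]_n := \col_j (m j)%:Z.

Lemma mexp_inj : injective mexp.
Proof.
move=> m1 m2 e; apply/mnmP => j.
have /eqP := congr1 (fun v : 'cV[int]_n => v j 0) e.
by rewrite !mxE eqz_nat => /eqP.
Qed.

Lemma mexp_absz (v : 'cV[int]_n) :
  (forall j, 0 <= v j 0) -> mexp [multinom absz (v j ord0) | j < n] = v.
Proof.
by move=> v_ge0; apply/matrixP => j k; rewrite (ord1 k) !mxE mnmE gez0_abs.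
Qed.

Lemma epow_mexp m : epow (mexp m) = ('X_[m] : RR)%:F.
Proof.
rewrite epowE mpolyXE_id rmorph_prod; apply: eq_bigr => j _.
by rewrite mxE rmorphXn.
Qed.

Lemma msubstE (M : 'M[int]_n) p :
  msubst M p = \sum_(m <- msupp p) cfrac p@_m * epow (M *m mexp m).
Proof.
apply: eq_bigr => m _; rewrite epow_mulmx; congr (_ * _).
by apply: eq_bigr => j _; rewrite mxE.
Qed.

Lemma col_shift_ge0 (S : seq 'cV[int]_n) :
  exists K : 'cV[int]_n, forall y, y \in S -> forall j, 0 <= (y + K) j 0.
Proof.
exists (\col_j \sum_(y <- S) `|y j 0|) => y yS j; rewrite !mxE.
rewrite (big_rem y) //= addrA addr_ge0 ?sumr_ge0 //.
by rewrite addrC -[y j 0]opprK subr_ge0 normrN ler_norm.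
Qed.

Lemma msubst_eq0 (M : 'M[int]_n) p :
  M \in unitmx -> (msubst M p == 0) = (p == 0).
Proof.
move=> M_unit; apply/idP/idP => [|/eqP->]; last by rewrite rmorph0.
apply: contraLR => p_neq0; set S := msupp p.
have [K K_ge0] := col_shift_ge0 [seq M *m mexp m | m <- S].
pose g m := [multinom absz ((M *m mexp m + K)%R j ord0) | j < n].
have gE m : m \in S -> mexp (g m) = M *m mexp m + K.
  by move=> mS; apply/mexp_absz/K_ge0/map_f.
have g_inj : {in S &, injective g}.
  move=> m1 m2 m1S m2S /(congr1 mexp); rewrite !gE // => /addIr.
  by move/(can_inj (mulKmx M_unit))/mexp_inj.
pose q : RR := \sum_(m <- S) p@_m *: 'X_[g m].
have shiftE : msubst M p * epow K = q%:F.
  rewrite msubstE mulr_suml rmorph_sum; apply: eq_big_seq => m mS.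
  by rewrite -mulrA -epowD -gE // epow_mexp -mul_mpolyC rmorphM.
have [m0 m0S] : exists m0, m0 \in S.
  case eS: S => [|m0 s]; last by exists m0; rewrite inE eqxx.
  by rewrite -msupp_eq0 -/S eS eqxx in p_neq0.
have q_m0 : q@_(g m0) = p@_m0.
  rewrite raddf_sum (bigD1_seq m0) ?msupp_uniq //= big1_seq.
    by rewrite mcoeffZ mcoeffX eqxx mulr1 addr0.
  move=> m /andP[m_neq_m0 mS]; rewrite mcoeffZ mcoeffX.
  by case: eqP => [/g_inj e|]; [rewrite e ?eqxx in m_neq_m0 | rewrite mulr0].
apply/eqP => msubst0; move: shiftE; rewrite msubst0 mul0r => /esym/eqP.
rewrite tofrac_eq0 => /eqP q0.
by move: m0S; rewrite mcoeff_msupp -q_m0 q0 mcoeff0 eqxx.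
Qed.

Lemma wactE (M : 'M[int]_n) (f : FF) :
  wact M f = msubst M (\n_(repr f)) / msubst M (\d_(repr f)).
Proof. by []. Qed.

Lemma wact1mx (f : FF) : wact 1%:M f = f.
Proof.
suff msubst1 (p : RR) : msubst 1%:M p = p%:F.
  by rewrite wactE !msubst1 -frac_reprE.
rewrite msubstE [in RHS](mpolyE p) rmorph_sum; apply: eq_bigr => m _.
by rewrite -mul_mpolyC rmorphM mul1mx epow_mexp.
Qed.

Section WeylAction.
Variable M : 'M[int]_n.
Hypothesis M_unit : M \in unitmx.

Lemma wact_frac (a d : RR) : d != 0 ->
  wact M (a%:F / d%:F) = msubst M a / msubst M d.
Proof.
move=> d_neq0; set f := a%:F / d%:F.
have := frac_reprE f; rewrite {1}/f => /eqP.
rewrite eqr_div ?tofrac_eq0 ?denom_ratioP // -!tofracM tofrac_eq => /eqP e.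
apply/eqP; rewrite wactE eqr_div ?msubst_eq0 ?denom_ratioP // -!rmorphM.
by rewrite e.
Qed.

Lemma wact_tofrac (a : RR) : wact M a%:F = msubst M a.
Proof.
by have := wact_frac a (oner_neq0 RR); rewrite tofrac1 !divr1 rmorph1 divr1.
Qed.

Lemma wactD : {morph wact M : x y / x + y}.
Proof.
move=> x y; rewrite [x]frac_reprE [y]frac_reprE.
set a := \n_(repr x); set b := \d_(repr x).
set c := \n_(repr y); set d := \d_(repr y).
have b_neq0 : b != 0 := denom_ratioP _.
have d_neq0 : d != 0 := denom_ratioP _.
rewrite addf_div ?tofrac_eq0 // -!tofracM -tofracD !wact_frac ?mulf_neq0 //.
by rewrite rmorphD !rmorphM addf_div ?msubst_eq0.
Qed.

Lemma wact_is_zmod_morphism : zmod_morphism (wact M).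
Proof. by move=> x y; apply: (canRL (addrK _)); rewrite -wactD subrK. Qed.

Lemma wactM : {morph wact M : x y / x * y}.
Proof.
move=> x y; rewrite [x]frac_reprE [y]frac_reprE.
set a := \n_(repr x); set b := \d_(repr x).
set c := \n_(repr y); set d := \d_(repr y).
have b_neq0 : b != 0 := denom_ratioP _.
have d_neq0 : d != 0 := denom_ratioP _.
by rewrite mulf_div -!tofracM !wact_frac ?mulf_neq0 // !rmorphM mulf_div.
Qed.

Lemma wact_is_monoid_morphism : monoid_morphism (wact M).
Proof. by split; [rewrite -tofrac1 wact_tofrac rmorph1 | exact: wactM]. Qed.

HB.instance Definition _ := GRing.isZmodMorphism.Build FF FF (wact M)
  wact_is_zmod_morphism.
HB.instance Definition _ := GRing.isMonoidMorphism.Build FF FF (wact M)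
  wact_is_monoid_morphism.

Lemma wact_epow (v : 'cV[int]_n) : wact M (epow v) = epow (M *m v).
Proof.
rewrite epowE rmorph_prod epow_mulmx; apply: eq_bigr => j _.
by rewrite rmorphXz ?unitfE ?xvar_neq0 //= wact_tofrac mmapX mmap1U.
Qed.

Lemma wact_msubst (N : 'M[int]_n) (p : RR) :
  wact M (msubst N p) = msubst (M *m N) p.
Proof.
rewrite !msubstE rmorph_sum; apply: eq_bigr => m _.
by rewrite rmorphM /= wact_tofrac mmapC wact_epow mulmxA.
Qed.

Lemma wact_comp (N : 'M[int]_n) (f : FF) : wact M (wact N f) = wact (M *m N) f.
Proof. by rewrite [wact N f]wactE rmorphM fmorphV /= !wact_msubst. Qed.

End WeylAction.

End LaurentMonomials.

Lemma reflection_invol (R : comRingType) (n : nat) (u v : 'cV[R]_n) :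
  v^T *m u = 2%:M -> (1%:M - u *m v^T) *m (1%:M - u *m v^T) = 1%:M.
Proof.
move=> vu; rewrite mulmxBl mul1mx mulmxBr mulmx1 mulmxA -(mulmxA u) vu.
rewrite mul_mx_scalar -scalemxAl; apply/matrixP => a b; rewrite !mxE; ring.
Qed.

Section CartanReflections.
Variables (n : nat) (Cm : 'M[int]_n).
Hypothesis Cm_diag : forall i, Cm i i = 2.

Lemma simple_coroot_pairing i : (delta_mx i 0)^T *m alpha Cm i = 2%:M.
Proof.
rewrite trmx_delta -rowE.
by apply/matrixP => a b; rewrite (ord1 a) (ord1 b) !mxE Cm_diag.
Qed.

Lemma sP_invol i : sP Cm i *m sP Cm i = 1%:M.
Proof. by rewrite /sP -trmx_delta reflection_invol ?simple_coroot_pairing. Qed.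

Lemma sP_unit i : sP Cm i \in unitmx.
Proof. exact: (mulmx1_unit (sP_invol i)).1. Qed.

Lemma wprodQ_tr_wprod w : (wprodQ Cm w)^T *m wprod Cm w = 1%:M.
Proof.
elim: w => [|i w IH] /=; first by rewrite trmx1 mul1mx.
by rewrite trmx_mul trmxK -mulmxA (mulmxA (sP Cm i)) sP_invol mul1mx.
Qed.

Lemma coroot_pairing th thv : coroot_of Cm th thv -> thv^T *m th = 2%:M.
Proof.
case=> w [i [-> ->]]; rewrite trmx_mul mulmxA -(mulmxA _ _ (wprod Cm w)).
by rewrite wprodQ_tr_wprod mulmx1 simple_coroot_pairing.
Qed.

Lemma reflP_unit th thv : coroot_of Cm th thv -> reflP th thv \in unitmx.
Proof. by move/coroot_pairing/reflection_invol/mulmx1_unit => []. Qed.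

End CartanReflections.

Section FormalSums.
Variables (F V : zmodType) (K : eqType).

Definition coef (s : seq (F * K)) (k : K) : F := \sum_(p <- s | p.2 == k) p.1.

Variable h : K -> F -> V.
Hypothesis hD : forall k, {morph h k : x y / x + y}.

Lemma sum_coef (S : seq K) (s : seq (F * K)) :
  uniq S -> {subset map snd s <= S} ->
  \sum_(p <- s) h p.2 p.1 = \sum_(k <- S) h k (coef s k).
Proof.
have h0 k : h k 0 = 0 by apply: (addrI (h k 0)); rewrite -hD !addr0.
move=> S_uniq; elim: s => [_|p s IH sS].
  by rewrite big_nil big1 // => k _; rewrite /coef big_nil h0.
have pS : p.2 \in S by apply: sS; rewrite inE eqxx.
rewrite big_cons IH => [|k ks]; last by apply: sS; rewrite inE ks orbT.
have coef_cons k :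
    h k (coef (p :: s) k) = h k (if p.2 == k then p.1 else 0) + h k (coef s k).
  by rewrite /coef big_cons -hD; case: ifP; rewrite ?add0r.
under [RHS]eq_bigr => k _ do rewrite coef_cons.
rewrite big_split /=; congr (_ + _).
rewrite (bigD1_seq p.2) //= eqxx big1 ?addr0 // => k.
by rewrite eq_sym => /negbTE->.
Qed.

Lemma eq_sum_coef (s s' : seq (F * K)) : coef s =1 coef s' ->
  \sum_(p <- s) h p.2 p.1 = \sum_(p <- s') h p.2 p.1.
Proof.
move=> ss'; set S := undup (map snd (s ++ s')).
have sS : {subset map snd s <= S}.
  by move=> k ks; rewrite mem_undup map_cat mem_cat ks.
have s'S : {subset map snd s' <= S}.
  by move=> k ks; rewrite mem_undup map_cat mem_cat ks orbT.
rewrite (sum_coef (undup_uniq _) sS) (sum_coef (undup_uniq _) s'S).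
by apply: eq_bigr => k _; rewrite ss'.
Qed.

End FormalSums.

Section InducedAction.
Variable n : nat.
Implicit Types (s t : Aelt n) (c : Celt n).

Lemma Ccoef_cat c c' b : Ccoef (c ++ c') b = Ccoef c b + Ccoef c' b.
Proof. exact: big_cat. Qed.

Lemma Ccoef_scale (k : CP n) c b :
  Ccoef [seq (k * q.1, q.2) | q <- c] b = k * Ccoef c b.
Proof. by rewrite /Ccoef big_map mulr_sumr. Qed.

Definition Cact s c : Celt n :=
  [seq (p.1 * wact p.2.1.1 q.1, p.2.2 + p.2.1.2 *m q.2) | p <- s, q <- c].

Definition weyl_unit s := {in s, forall p, p.2.1.1 \in unitmx}.

Lemma prA_Amul s t : prA (Amul s t) = Cact s (prA t).
Proof.
rewrite /prA /Amul /Cact map_allpairs allpairs_mapr.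
by apply: eq_allpairs => p q.
Qed.

Lemma Cact_cat s s' c : Cact (s ++ s') c = Cact s c ++ Cact s' c.
Proof. exact: allpairs_cat. Qed.

Lemma Cact_scale (k : CP n) s c :
  Cact [seq (k * p.1, p.2) | p <- s] c = [seq (k * q.1, q.2) | q <- Cact s c].
Proof.
rewrite /Cact allpairs_mapl map_allpairs.
by apply: (eq_allpairs _ (fun=> c)) => p q /=; rewrite mulrA.
Qed.

Lemma Cact_waf1 c : Cact [:: (1, waf1 n)] c = c.
Proof.
rewrite /Cact /= cats0 -[RHS]map_id; apply: eq_map => -[f b] /=.
by rewrite mul1r wact1mx mul1mx add0r.
Qed.

Lemma Cact_Amul s t c :
  weyl_unit s -> Cact (Amul s t) c = Cact s (Cact t c).
Proof.
elim: s => //= p s IH s_unit.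
rewrite /Amul allpairs_cons Cact_cat -/(Amul s t) IH => [|q qs]; last first.
  by apply: s_unit; rewrite inE qs orbT.
rewrite /Cact allpairs_cons allpairs_mapl map_allpairs; congr (_ ++ _).
apply: eq_allpairs => q r /=; have p_unit := s_unit p (mem_head p s).
by rewrite wactM // wact_comp // mulrA mulmxDr mulmxA addrA.
Qed.

Lemma Ccoef_Cact s c b : Ccoef (Cact s c) b =
  \sum_(p <- s) \sum_(q <- c)
     (if p.2.2 + p.2.1.2 *m q.2 == b then p.1 * wact p.2.1.1 q.1 else 0).
Proof.
rewrite /Ccoef big_mkcond big_flatten big_map.
by apply: eq_bigr => p _; rewrite big_map.
Qed.

Lemma eq_Ccoef_Cactr s c c' : weyl_unit s -> Ccoef c =1 Ccoef c' ->
  Ccoef (Cact s c) =1 Ccoef (Cact s c').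
Proof.
move=> s_unit cc' b; rewrite !Ccoef_Cact; apply: eq_big_seq => p ps.
apply: (eq_sum_coef (h := fun be x =>
  if p.2.2 + p.2.1.2 *m be == b then p.1 * wact p.2.1.1 x else 0)) => // be x y.
by case: ifP; rewrite ?addr0 // wactD ?mulrDr ?s_unit.
Qed.

Lemma eq_Ccoef_Cactl s s' c : Acoef s =1 Acoef s' ->
  Ccoef (Cact s c) =1 Ccoef (Cact s' c).
Proof.
move=> ss' b; rewrite !Ccoef_Cact.
apply: (eq_sum_coef (h := fun (x : waf n) g => \sum_(q <- c)
  if x.2 + x.1.2 *m q.2 == b then g * wact x.1.1 q.1 else 0)) => [x f g|//].
rewrite -big_split /=; apply: eq_bigr => q _.
by case: ifP => _; rewrite ?addr0 ?mulrDl.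
Qed.

Lemma Ccoef_linext_Cact (g : CP n * 'cV[int]_n -> Celt n) s :
  (forall q, g q = Cact s [:: q]) ->
  forall c, Ccoef (linext g c) =1 Ccoef (Cact s c).
Proof.
move=> gE c b; have -> : Ccoef (linext g c) b = \sum_(q <- c) Ccoef (g q) b.
  by rewrite /Ccoef /linext big_flatten big_map.
rewrite Ccoef_Cact exchange_big; apply: eq_bigr => q _.
by rewrite gE Ccoef_Cact; apply: eq_bigr => p _; rewrite big_seq1.
Qed.

End InducedAction.

Section Embedding.
Variables (n : nat) (Cm : 'M[int]_n) (th thv : 'cV[int]_n).

Lemma phi_gen_e_Cact l q : phi_gen_e l q = Cact [:: (epow l, waf1 n)] [:: q].
Proof. by rewrite /Cact /= wact1mx mul1mx add0r. Qed.

Lemma phi_gen_D_Cact i q :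
  phi_gen_D Cm th thv i q = Cact (iota_gen_D Cm th thv i) [:: q].
Proof.
case: i => [i|]; rewrite /Cact /= wact1mx mul1mx !add0r div1r.
all: rewrite mulrC mulNr mulrAC //.
by rewrite [reflQ _ _ *m - _ + _]addrC mulmxDr.
Qed.

Hypothesis Cm_diag : forall i, Cm i i = 2.
Hypothesis th_thv : coroot_of Cm th thv.

Lemma iotaA_weyl_unit E : weyl_unit (iotaA Cm th thv E).
Proof.
elim: E => [l|[i|]| |E1 IH1 E2 IH2|a E1 IH|E1 IH1 E2 IH2] p /=.
- by rewrite inE => /eqP->; exact: unitmx1.
- by rewrite !inE => /orP[]/eqP->; [exact: unitmx1 | exact: sP_unit].
- by rewrite !inE => /orP[]/eqP->; [exact: unitmx1 | exact: reflP_unit].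
- by rewrite inE => /eqP->; exact: unitmx1.
- by rewrite mem_cat => /orP[]; [exact: IH1 | exact: IH2].
- by case/mapP => q /IH ? ->.
- case/allpairsP => -[p1 p2] /= [/IH1 p1_unit /IH2 p2_unit ->].
  by rewrite unitmx_mul p1_unit p2_unit.
Qed.

Lemma Ccoef_phiC E c :
  Ccoef (phiC Cm th thv E c) =1 Ccoef (Cact (iotaA Cm th thv E) c).
Proof.
elim: E c => [l|i| |E1 IH1 E2 IH2|a E1 IH|E1 IH1 E2 IH2] c b /=.
- exact/Ccoef_linext_Cact/phi_gen_e_Cact.
- exact/Ccoef_linext_Cact/phi_gen_D_Cact.
- by rewrite Cact_waf1.
- by rewrite Cact_cat !Ccoef_cat IH1 IH2.
- by rewrite Cact_scale !Ccoef_scale IH.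
- rewrite IH1 (eq_Ccoef_Cactr (iotaA_weyl_unit (E := E1)) (IH2 c)).
  by rewrite Cact_Amul //; exact: iotaA_weyl_unit.
Qed.

End Embedding.

Unset Implicit Arguments.

Theorem proposition2p3
  (n : nat) (Cm : 'M[int]_n) (th thv : 'cV[int]_n) (w0 : seq 'I_n) :
  simple_cartan Cm ->
  highest_root Cm th ->
  coroot_of Cm th thv ->
  longest_word Cm w0 ->
  (* (1) the formulas give a well-defined linear map on C for each element
         of the free algebra on the generators ... *)
  (forall (E : hexpr n) (s s' : Celt n),
     (forall b, Ccoef s b = Ccoef s' b) ->
     forall b, Ccoef (phiC Cm th thv E s) b = Ccoef (phiC Cm th thv E s') b) /\
  (* (2) ... which only depends on the image of the element in H = iota^*(..),
         i.e. they define an action of the nil-DAHA H on C ... *)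
  (forall (E E' : hexpr n),
     (forall x, Acoef (iotaA Cm th thv E) x = Acoef (iotaA Cm th thv E') x) ->
     forall (s : Celt n) b,
       Ccoef (phiC Cm th thv E s) b = Ccoef (phiC Cm th thv E' s) b) /\
  (* (3) and r^* = pr o iota^* intertwines the action of H on
         K_H(Gr) = H D_{w_0} (left multiplication) with this action. *)
  (forall (E F : hexpr n) b,
     Ccoef (prA (iotaA Cm th thv (Hmul E (Hmul F (Dword w0))))) b =
     Ccoef (phiC Cm th thv E (prA (iotaA Cm th thv (Hmul F (Dword w0))))) b).
Proof.
move=> [_ [Cm_diag _ _ _ _]] _ th_thv _.
have phiC_Cact := Ccoef_phiC Cm_diag th_thv.
split; [|split].
- move=> E s s' ss' b; rewrite !phiC_Cact.
  exact: eq_Ccoef_Cactr (iotaA_weyl_unit Cm_diag th_thv (E := E)) ss' b.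
- by move=> E E' EE' s b; rewrite !phiC_Cact; exact: eq_Ccoef_Cactl.
- by move=> E F b; rewrite phiC_Cact /= prA_Amul.
Qed.
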